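(* Let $G$ be a $3$-graph on $n$ vertices with $4 \mid n$ and $\delta(G) \ge 3n/4-1$. Let $(A,B)$ be a partition of $V(G)$ with $3n/16 < |A| < 5n/16$. Then $G$ contains a copy of $K^3_4$ with an odd number of vertices in both $A$ and $B$.
   Context: A $3$-graph is a set of $3$-element subsets (edges) of a vertex set; $\delta(G)$ is the largest $m$ such that every pair of vertices lies in at least $m$ edges. A copy of $K^3_4$ in $G$ is a $4$-set of vertices all of whose $3$-subsets are edges of $G$. *)

From mathcomp Require Import all_boot.
Set Implicit Arguments. Unset Strict Implicit. Unset Printing Implicit Defensive.

Definition is_3graph (T : finType) (G : {set {set T}}) : Prop :=
  forall e, e \in G -> #|e| = 3.

Definition codeg (T : finType) (G : {set {set T}}) (x y : T) : nat :=
  #|[set e in G | (x \in e) && (y \in e)]|.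

Definition is_K43 (T : finType) (G : {set {set T}}) (S : {set T}) : Prop :=
  #|S| = 4 /\ forall e : {set T}, e \subset S -> #|e| = 3 -> e \in G.

(* Suppose there is no such K43: then no K43 has one vertex on one side of
   (A, B) and three on the other.  Write n = 4k; the codegree condition says that
   every pair misses at most k - 1 third vertices.

   If x is in A and xyz is an edge with y, z in B, then, as x, y, z, w do not span
   a K43, every further w in B misses one of the pairs xy, xz, yz, so
   |B| - 2 <= 3(k - 1).  This rules out |A| <= k.  For |A| = k + 1 the bound is
   tight, which forces "u = v or xuv is not an edge" to be an equivalence on B
   whose classes have size k; but k does not divide |B| = 3k - 1.

   For |A| >= k + 2 both sides are large.  For an edge yzw inside B every x in A
   misses one of yz, yw, zw; summing over ordered triples of B gives a lower bound
   on the non-edges xyz with x in A and y, z in B, and symmetrically with A and B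
   exchanged.  Together these exceed what the codegree bound allows for the pairs
   in A x B. *)

From mathcomp Require Import all_boot zify.
From Stdlib Require Import Classical.
Set Implicit Arguments. Unset Strict Implicit. Unset Printing Implicit Defensive.

Lemma sum_bool_card (T : finType) (p : pred T) : \sum_w (p w : nat) = #|[set w | p w]|.
Proof. by rewrite -sum1dep_card [RHS]big_mkcond; apply: eq_bigr => w _; case: (p w). Qed.

Lemma sum_bool_split (T : finType) (p q : pred T) :
  \sum_w (p w : nat) = \sum_w (p w && q w : nat) + \sum_w (p w && ~~ q w : nat).
Proof. by rewrite -big_split; apply: eq_bigr => w _; case: (p w); case: (q w). Qed.

Lemma cards_sum (T : finType) (A : {set T}) : #|A| = \sum_x (x \in A : nat).
Proof. by rewrite sum_bool_card; apply: eq_card => x; rewrite inE. Qed.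

Lemma cards3 (T : finType) (x y z : T) :
  x != y -> x != z -> y != z -> #|[set x; y; z]| = 3.
Proof.
by move=> xy xz yz; rewrite -setUA cardsU1 cards2 !inE negb_or xy xz yz.
Qed.

Section OutsidePairs.
Variables (T : finType) (P : {set T}).
Implicit Types (x y z w : T).

Definition pair_out y z := [&& y \notin P, z \notin P & y != z].
Definition third_out y z w := [&& w \notin P, y != w & z != w].
Definition triple_out y z w := pair_out y z && third_out y z w.

Lemma sum_pair_out_r y : y \notin P -> \sum_z (pair_out y z : nat) = #|~: P| - 1.
Proof.
move=> yP; rewrite sum_bool_card (cardsD1 y (~: P)) inE yP addKn.
by apply: eq_card => z; rewrite !inE /pair_out yP (eq_sym y z) /= andbC.
Qed.

Lemma sum_pair_out : \sum_y \sum_z (pair_out y z : nat) = #|~: P| * (#|~: P| - 1).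
Proof.
rewrite {1}[#|~: P|]cards_sum big_distrl; apply: eq_bigr => y _ /=.
rewrite inE; case: (boolP (y \in P)) => [yP | yP]; last by rewrite sum_pair_out_r // mul1n.
by rewrite big1 // => z _; rewrite /pair_out yP.
Qed.

Lemma sum_third_out y z : pair_out y z -> \sum_w (third_out y z w : nat) = #|~: P| - 2.
Proof.
case/and3P => yP zP yz; rewrite sum_bool_card.
have -> : [set w | third_out y z w] = ~: P :\ y :\ z.
  apply/setP => w; rewrite !inE /third_out (eq_sym y w) (eq_sym z w).
  by case: (w \in P); case: (w == y); case: (w == z).
have := cardsD1 y (~: P); have := cardsD1 z (~: P :\ y).
rewrite !inE yP zP eq_sym yz /=; lia.
Qed.

Lemma triple_out_swapr y z w : triple_out y z w = triple_out y w z.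
Proof.
rewrite /triple_out /pair_out /third_out (eq_sym w z).
by case: (y \in P); case: (z \in P); case: (w \in P);
  case: (y == z); case: (y == w); case: (z == w).
Qed.

Lemma triple_out_rot y z w : triple_out y z w = triple_out z w y.
Proof.
rewrite /triple_out /pair_out /third_out (eq_sym w y) (eq_sym z y).
by case: (y \in P); case: (z \in P); case: (w \in P);
  case: (y == z); case: (y == w); case: (z == w).
Qed.

Lemma sum_triple_out (F : T -> T -> nat) :
  \sum_y \sum_z \sum_w (triple_out y z w : nat) * (F y z + F y w + F z w) =
  3 * (#|~: P| - 2) * \sum_y \sum_z (pair_out y z : nat) * F y z.
Proof.
have sum_yz : \sum_y \sum_z \sum_w (triple_out y z w : nat) * F y z =
              (#|~: P| - 2) * \sum_y \sum_z (pair_out y z : nat) * F y z.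
  rewrite big_distrr; apply: eq_bigr => y _; rewrite big_distrr; apply: eq_bigr => z _ /=.
  rewrite -big_distrl /= /triple_out.
  case: (boolP (pair_out y z)) => [yz | _] /=; last by rewrite big1 // !mul0n muln0.
  by rewrite sum_third_out // mul1n mulnC.
have sum_yw : \sum_y \sum_z \sum_w (triple_out y z w : nat) * F y w =
              \sum_y \sum_z \sum_w (triple_out y z w : nat) * F y z.
  apply: eq_bigr => y _; rewrite exchange_big; apply: eq_bigr => z _.
  by apply: eq_bigr => w _; rewrite triple_out_swapr.
have sum_zw : \sum_y \sum_z \sum_w (triple_out y z w : nat) * F z w =
              \sum_y \sum_z \sum_w (triple_out y z w : nat) * F y z.
  rewrite exchange_big; apply: eq_bigr => z _; rewrite exchange_big.
  by apply: eq_bigr => w _; apply: eq_bigr => y _; rewrite triple_out_rot.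
have -> : \sum_y \sum_z \sum_w (triple_out y z w : nat) * (F y z + F y w + F z w) =
  \sum_y \sum_z \sum_w (triple_out y z w : nat) * F y z +
  \sum_y \sum_z \sum_w (triple_out y z w : nat) * F y w +
  \sum_y \sum_z \sum_w (triple_out y z w : nat) * F z w.
  rewrite -!big_split; apply: eq_bigr => y _; rewrite -!big_split.
  by apply: eq_bigr => z _; rewrite -!big_split; apply: eq_bigr => w _; rewrite !mulnDr.
by rewrite sum_yw sum_zw sum_yz; lia.
Qed.

End OutsidePairs.

Lemma double_count_lower a b m s t :
  a + b = 4 * m + 4 -> 0 < a -> m + 2 < b ->
  a * (b * (b - 1) * (b - 2)) <= 3 * (b - 2) * s + a * t -> s + t <= b * (b - 1) * m ->
  a * (b * (b - 1)) < 4 * s.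
Proof.
(* With B = b (b - 1) and d = b - 2 the hypotheses give a B (d - m) <= (4 (d - m) - 2) s. *)
move=> ab a_gt0 b_gt hs ht.
have : 0 < b * (b - 1) by rewrite muln_gt0; apply/andP; split; lia.
have : a + (b - 2) = 4 * m + 2 by lia.
have : m < b - 2 by lia.
move: hs ht; move: (b * (b - 1)) (b - 2) => B d hs ht d_gt ad B_gt0.
have : a * s + a * t <= a * (B * m) by rewrite -mulnDr leq_mul2l ht orbT.
clear -a_gt0 hs d_gt ad B_gt0; nia.
Qed.

Lemma double_count_absurd a b m s1 t1 s2 t2 :
  a + b = 4 * m + 4 -> m + 2 < a -> m + 2 < b ->
  a * (b * (b - 1) * (b - 2)) <= 3 * (b - 2) * s1 + a * t1 -> s1 + t1 <= b * (b - 1) * m ->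
  b * (a * (a - 1) * (a - 2)) <= 3 * (a - 2) * s2 + b * t2 -> s2 + t2 <= a * (a - 1) * m ->
  s1 + s2 <= a * b * m -> False.
Proof.
move=> ab a_gt b_gt hs1 ht1 hs2 ht2 cross.
have ba : b + a = 4 * m + 4 by rewrite addnC.
have [a_gt0 b_gt0] : 0 < a /\ 0 < b by lia.
have := double_count_lower ab a_gt0 b_gt hs1 ht1.
have := double_count_lower ba b_gt0 a_gt hs2 ht2.
have : a * (b * (b - 1)) + b * (a * (a - 1)) = 4 * (a * b * m) + 2 * (a * b).
  rewrite mulnA [b * (a * _)]mulnA [b * a]mulnC -mulnDr.
  by rewrite (_ : b - 1 + (a - 1) = 4 * m + 2) ?mulnDr ?mulnA //; lia.
clear -cross; lia.
Qed.

Section Link.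
Variables (T : finType) (G : {set {set T}}).
Implicit Types (P : {set T}) (x y z w u v : T).

Definition edge x y z := [set x; y; z] \in G.

Lemma edge_swapl x y z : edge x y z = edge y x z.
Proof.
rewrite /edge; congr (_ \in G); apply/setP => u; rewrite !inE.
by case: (u == x); case: (u == y).
Qed.

Lemma edge_swapr x y z : edge x y z = edge x z y.
Proof.
rewrite /edge; congr (_ \in G); apply/setP => u; rewrite !inE.
by case: (u == x); case: (u == y); case: (u == z).
Qed.

Lemma edge_rot x y z : edge x y z = edge y z x.
Proof. by rewrite edge_swapl edge_swapr. Qed.

Definition missing P x y := \sum_w [&& w \in P, w != x, w != y & ~~ edge x y w].

Lemma missing_split P x y : missing P x y + missing (~: P) x y = missing setT x y.
Proof.
rewrite /missing -big_split; apply: eq_bigr => w _; rewrite !inE.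
by case: (w \in P); case: (w != x); case: (w != y); case: (edge x y w).
Qed.

Lemma missing_le_setT P x y : missing P x y <= missing setT x y.
Proof. by rewrite -(missing_split P); apply: leq_addr. Qed.

Lemma codeg_missing x y :
  is_3graph G -> x != y -> codeg G x y + missing setT x y + 2 <= #|T|.
Proof.
move=> G3 xy.
have third_count : #|T| - 2 = \sum_w ((w != x) && (w != y) : nat).
  rewrite sum_bool_card.
  have -> : [set w | (w != x) && (w != y)] = ~: [set x; y].
    by apply/setP => w; rewrite !inE negb_or.
  by rewrite cardsCs setCK cards2 xy.
have -> : missing setT x y = \sum_w ((w != x) && (w != y) && ~~ edge x y w : nat).
  by rewrite /missing; apply: eq_bigr => w _; rewrite in_setT /= andbA.
have codeg_le : codeg G x y <= \sum_w ((w != x) && (w != y) && edge x y w : nat).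
  rewrite sum_bool_card /codeg.
  apply: leq_trans (leq_imset_card (fun w => [set x; y; w]) _).
  apply: subset_leq_card; apply/subsetP => e; rewrite inE => /andP [eG /andP [xe ye]].
  have : 0 < #|e :\ x :\ y|.
    have := cardsD1 x e; have := cardsD1 y (e :\ x).
    rewrite xe !inE eq_sym xy ye (G3 e eG) /=; lia.
  case/card_gt0P => w; rewrite !inE => /and3P [wy wx we].
  have ee : e = [set x; y; w].
    have cw : #|[set x; y; w]| = 3 by rewrite cards3 // [_ == w]eq_sym.
    apply/eqP; rewrite eq_sym eqEcard (G3 e eG) cw leqnn andbT.
    by apply/subsetP => u; rewrite !inE => /orP [/orP [] |] /eqP ->.
  by apply/imsetP; exists w => //; rewrite inE wx wy /edge -ee eG.
have n2 : 2 <= #|T| by apply: leq_trans (max_card [set x; y]); rewrite cards2 xy.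
rewrite -(subnK n2) leq_add2r third_count.
apply: leq_trans (leq_add codeg_le (leqnn _)) _.
rewrite -big_split; apply: leq_sum => w _.
by case: (w != x); case: (w != y); case: (edge x y w).
Qed.

Definition K43_free_1_3 P := forall x y z w,
  x \in P -> y \notin P -> z \notin P -> w \notin P -> y != z -> y != w -> z != w ->
  edge x y z -> edge x y w -> edge x z w -> edge y z w -> False.

Lemma K43_1_3 P x y z w :
  x \in P -> y \notin P -> z \notin P -> w \notin P -> y != z -> y != w -> z != w ->
  edge x y z -> edge x y w -> edge x z w -> edge y z w ->
  exists S, is_K43 G S /\ odd #|S :&: P| /\ odd #|S :&: ~: P|.
Proof.
move=> xP yP zP wP yz yw zw Exyz Exyw Exzw Eyzw.
have xy : x != y by apply: contraNneq yP => <-.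
have xz : x != z by apply: contraNneq zP => <-.
have xw : x != w by apply: contraNneq wP => <-.
set S := [set x; y; z; w].
have cardS : #|S| = 4.
  by rewrite /S -!setUA !cardsU1 cards1 !inE !negb_or xy xz xw yz yw zw.
have cardSP : 0 < #|S :&: P| by apply/card_gt0P; exists x; rewrite !inE eqxx xP.
have cardSC : 3 <= #|S :&: ~: P|.
  rewrite -(cards3 yz yw zw); apply: subset_leq_card; apply/subsetP => u.
  by rewrite !inE => /orP [/orP [] |] /eqP ->; rewrite ?yP ?zP ?wP eqxx ?orbT.
exists S; split; last first.
  have := cardsID P S; rewrite setDE cardS.
  move: cardSP cardSC; move: #|S :&: P| #|S :&: ~: P| => p q p1 q3 pq.
  by have [-> ->] : p = 1 /\ q = 3 by clear -p1 q3 pq; lia.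
split=> // e eS ce.
have /subsetPn [v vS ve] : ~~ (S \subset e).
  by apply/negP => /subset_leq_card; rewrite cardS ce.
have eq_of_sub (t : {set T}) : e \subset t -> #|t| = 3 -> e = t.
  by move=> et ct; apply/eqP; rewrite eqEcard et ct ce.
have sub_rm (t : {set T}) : (forall u, u \in S -> u != v -> u \in t) -> e \subset t.
  move=> St; apply/subsetP => u ue; apply: St; first exact: subsetP eS u ue.
  by apply: contraNneq ve => <-.
move: vS; rewrite !inE => /orP [/orP [/orP [] |] |] /eqP ev; subst v.
- rewrite (eq_of_sub [set y; z; w]) ?cards3 //; apply: sub_rm => u.
  by rewrite !inE => /orP [/orP [/orP [] |] |] ->; rewrite ?orbT.
- rewrite (eq_of_sub [set x; z; w]) ?cards3 //; apply: sub_rm => u.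
  by rewrite !inE => /orP [/orP [/orP [] |] |] ->; rewrite ?orbT.
- rewrite (eq_of_sub [set x; y; w]) ?cards3 //; apply: sub_rm => u.
  by rewrite !inE => /orP [/orP [/orP [] |] |] ->; rewrite ?orbT.
- rewrite (eq_of_sub [set x; y; z]) ?cards3 //; apply: sub_rm => u.
  by rewrite !inE => /orP [/orP [/orP [] |] |] ->; rewrite ?orbT.
Qed.

Definition gaps P x y z w : nat :=
  [&& w \in P, w != x, w != y & ~~ edge x y w] +
  [&& w \in P, w != x, w != z & ~~ edge x z w] +
  [&& w \in P, w != y, w != z & ~~ edge y z w].

Lemma sum_gaps P x y z :
  \sum_w gaps P x y z w = missing P x y + missing P x z + missing P y z.
Proof. by rewrite /missing -!big_split. Qed.

Lemma third_out_le_gaps P x y z w :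
  K43_free_1_3 P -> x \in P -> pair_out P y z -> edge x y z ->
  third_out P y z w <= gaps (~: P) x y z w.
Proof.
move=> freeP xP /and3P [yP zP yz] Exyz.
case/boolP: (third_out P y z w) => // /and3P [wP yw zw].
have wx : w != x by apply: contraNneq wP => ->.
rewrite /gaps !inE wP wx (eq_sym w y) (eq_sym w z) yw zw /=.
case: (boolP (edge x y w)) => Exyw; case: (boolP (edge x z w)) => Exzw //.
by case: (boolP (edge y z w)) => // Eyzw; case: (freeP x y z w).
Qed.

Lemma missing_triangle P x y z :
  K43_free_1_3 P -> x \in P -> pair_out P y z -> edge x y z ->
  #|~: P| - 2 <= missing (~: P) x y + missing (~: P) x z + missing (~: P) y z.
Proof.
move=> freeP xP yz Exyz; rewrite -(sum_third_out yz) -sum_gaps.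
by apply: leq_sum => w _; apply: third_out_le_gaps.
Qed.

Lemma missing_triangle_tight P x y z u :
  K43_free_1_3 P -> x \in P -> pair_out P y z -> edge x y z ->
  missing (~: P) x y + missing (~: P) x z + missing (~: P) y z <= #|~: P| - 2 ->
  third_out P y z u -> ~~ edge x y u -> edge x z u.
Proof.
move=> freeP xP yz Exyz tight yzu nExyu.
have le_gaps w := third_out_le_gaps w freeP xP yz Exyz.
have /forall_inP /(_ u isT) /eqP :
    [forall (w | true), (third_out P y z w : nat) == gaps (~: P) x y z w].
  rewrite -(leqif_sum (fun w _ => leqif_eq (le_gaps w))).2 sum_gaps (sum_third_out yz).
  by rewrite eqn_leq tight (missing_triangle freeP xP yz Exyz).
rewrite yzu => /esym.
move: yzu; rewrite /gaps /third_out !inE nExyu => /and3P [uP yu zu].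
have ux : u != x by apply: contraNneq uP => ->.
rewrite uP ux (eq_sym u y) (eq_sym u z) yu zu /=.
by case: (edge x z u).
Qed.

Lemma exists_edge_out P x y :
  x \in P -> y \notin P -> missing (~: P) x y < #|~: P| - 1 ->
  exists z, pair_out P y z && edge x y z.
Proof.
move=> xP yP lt_missing; apply/existsP; apply: contraTT lt_missing => /existsPn nE.
rewrite -leqNgt -(sum_pair_out_r yP) /missing; apply: leq_sum => z _.
have := nE z; case/boolP: (pair_out P y z) => //= /and3P [_ zP yz] nExyz.
have zx : z != x by apply: contraNneq zP => ->.
by rewrite !inE zP zx eq_sym yz nExyz.
Qed.

Lemma triangle_missing_in P y z w :
  K43_free_1_3 P -> pair_out P y z -> third_out P y z w -> edge y z w ->
  #|P| <= missing P y z + missing P y w + missing P z w.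
Proof.
move=> freeP /and3P [yP zP yz] /and3P [wP yw zw] Eyzw.
rewrite cards_sum /missing -!big_split; apply: leq_sum => x _.
case/boolP: (x \in P) => //= xP.
have xy : x != y by apply: contraNneq yP => <-.
have xz : x != z by apply: contraNneq zP => <-.
have xw : x != w by apply: contraNneq wP => <-.
rewrite xy xz xw /= -(edge_rot x y z) -(edge_rot x y w) -(edge_rot x z w).
case: (boolP (edge x y z)) => Exyz; case: (boolP (edge x y w)) => Exyw //.
by case: (boolP (edge x z w)) => // Exzw; case: (freeP x y z w).
Qed.

Definition sum_missing_pairs P Q := \sum_y \sum_z (pair_out P y z : nat) * missing Q y z.

(* For an edge yzw outside P every x in P misses yz, yw or zw; a non-edge yzw is
   counted in missing (~: P) y z, with weight #|P|. *)
Lemma pair_missing_bound P y z :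
  K43_free_1_3 P -> pair_out P y z ->
  #|P| * (#|~: P| - 2) <=
  \sum_w (third_out P y z w : nat) * (missing P y z + missing P y w + missing P z w) +
  #|P| * missing (~: P) y z.
Proof.
move=> freeP yz; rewrite -(sum_third_out yz) (sum_bool_split _ (edge y z)) mulnDr.
have -> : \sum_w (third_out P y z w && ~~ edge y z w : nat) = missing (~: P) y z.
  apply: eq_bigr => w _; rewrite /third_out !inE (eq_sym y w) (eq_sym z w).
  by case: (w \in P); case: (w == y); case: (w == z).
rewrite leq_add2r big_distrr /=; apply: leq_sum => w _.
case/boolP: (third_out P y z w) => yzw; case/boolP: (edge y z w) => Eyzw; rewrite /= ?muln0 //.
by rewrite mul1n muln1; apply: triangle_missing_in.
Qed.

Lemma sum_missing_pairs_free P :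
  K43_free_1_3 P ->
  #|P| * (#|~: P| * (#|~: P| - 1) * (#|~: P| - 2)) <=
  3 * (#|~: P| - 2) * sum_missing_pairs P P + #|P| * sum_missing_pairs P (~: P).
Proof.
move=> freeP.
have -> : #|P| * (#|~: P| * (#|~: P| - 1) * (#|~: P| - 2)) =
          \sum_y \sum_z (pair_out P y z : nat) * (#|P| * (#|~: P| - 2)).
  transitivity ((\sum_y \sum_z (pair_out P y z : nat)) * (#|P| * (#|~: P| - 2))).
    by rewrite sum_pair_out; lia.
  by rewrite big_distrl; apply: eq_bigr => y _; rewrite big_distrl.
rewrite /sum_missing_pairs -(sum_triple_out P (missing P)) big_distrr -big_split.
apply: leq_sum => y _; rewrite /= big_distrr -big_split; apply: leq_sum => z _ /=.
case/boolP: (pair_out P y z) => yz; last by rewrite !mul0n.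
rewrite !mul1n; apply: leq_trans (pair_missing_bound freeP yz) _.
by rewrite leq_add2r; apply: leq_sum => w _; rewrite /triple_out yz.
Qed.

Lemma sum_missing_pairs_in P :
  sum_missing_pairs P P = \sum_x \sum_y ([&& x \in P & y \notin P] : nat) * missing (~: P) x y.
Proof.
rewrite /sum_missing_pairs /missing.
under eq_bigr => y _ do under eq_bigr => z _ do rewrite big_distrr.
under [RHS]eq_bigr => x _ do under eq_bigr => y _ do rewrite big_distrr.
rewrite [RHS]exchange_big; apply: eq_bigr => y _; rewrite [RHS]exchange_big.
apply: eq_bigr => z _; apply: eq_bigr => x _ /=; rewrite !mulnb -edge_rot /pair_out inE.
case: (boolP (x \in P)) => xP; case: (boolP (y \in P)) => yP; rewrite /= ?andbF //.
have -> : x != y by apply: contraNneq yP => <-.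
rewrite (eq_sym z x) (eq_sym z y).
by case: (z \in P); case: (x == z); case: (y == z); case: (edge x y z).
Qed.

Lemma sum_missing_pairs_compl P :
  sum_missing_pairs (~: P) (~: P) =
  \sum_x \sum_y ([&& x \in P & y \notin P] : nat) * missing P x y.
Proof.
rewrite /sum_missing_pairs /missing.
under eq_bigr => y _ do under eq_bigr => z _ do rewrite big_distrr.
under [RHS]eq_bigr => x _ do under eq_bigr => y _ do rewrite big_distrr.
apply: eq_bigr => x _; rewrite exchange_big; apply: eq_bigr => y _; apply: eq_bigr => z _ /=.
rewrite !mulnb -edge_swapr /pair_out !inE !negbK.
case: (boolP (x \in P)) => xP; case: (boolP (y \in P)) => yP; rewrite /= ?andbF //.
have -> : y != x by apply: contraNneq yP => ->.
rewrite (eq_sym z x) (eq_sym z y).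
by case: (z \in P); case: (x == z); case: (y == z); case: (edge x z y).
Qed.

Section BoundedMissing.
Variable m : nat.
Hypothesis missing_le : forall x y, x != y -> missing setT x y <= m.

Lemma missing_out_le P x y : x != y -> missing (~: P) x y <= m.
Proof. by move=> xy; apply: leq_trans (missing_le_setT _ _ _) (missing_le xy). Qed.

Lemma sum_missing_pairs_le P :
  sum_missing_pairs P P + sum_missing_pairs P (~: P) <= #|~: P| * (#|~: P| - 1) * m.
Proof.
rewrite /sum_missing_pairs -big_split -sum_pair_out big_distrl.
apply: leq_sum => y _; rewrite /= -big_split big_distrl; apply: leq_sum => z _ /=.
rewrite -mulnDr missing_split; case/boolP: (pair_out P y z) => [/and3P [_ _ yz] | _].
  by rewrite !mul1n missing_le.
by rewrite !mul0n.
Qed.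

Lemma sum_missing_pairs_cross P :
  sum_missing_pairs P P + sum_missing_pairs (~: P) (~: P) <= #|P| * #|~: P| * m.
Proof.
rewrite sum_missing_pairs_in sum_missing_pairs_compl -big_split /=.
rewrite {1}cards_sum (cards_sum (~: P)) !big_distrl; apply: leq_sum => x _.
rewrite /= -big_split big_distrr big_distrl; apply: leq_sum => y _ /=.
rewrite -mulnDr addnC missing_split inE.
case: (boolP (x \in P)) => xP; case: (boolP (y \in P)) => yP; rewrite /= ?mul0n ?muln0 //.
rewrite !mul1n missing_le //; by apply: contraNneq yP => <-.
Qed.

Section OneVertex.
Variables (P : {set T}) (x : T).
Hypotheses (freeP : K43_free_1_3 P) (xP : x \in P).

Lemma exists_missing_triangle y : y \notin P -> m.+1 < #|~: P| ->
  exists z, pair_out P y z /\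
    #|~: P| - 2 <= missing (~: P) x y + missing (~: P) x z + missing (~: P) y z.
Proof.
move=> yP big.
have xy : x != y by apply: contraNneq yP => <-.
have [z /andP [yz Exyz]] : exists z, pair_out P y z && edge x y z.
  by apply: exists_edge_out => //; apply: leq_ltn_trans (missing_out_le P xy) _; lia.
by exists z; split => //; apply: missing_triangle.
Qed.

Lemma card_out_le : m.+1 < #|~: P| -> #|~: P| <= 3 * m + 2.
Proof.
move=> big; have /card_gt0P [y] : 0 < #|~: P| by lia.
rewrite inE => yP; have [z [/and3P [_ zP yz] tri]] := exists_missing_triangle yP big.
have xy : x != y by apply: contraNneq yP => <-.
have xz : x != z by apply: contraNneq zP => <-.
have := missing_out_le P xy; have := missing_out_le P xz; have := missing_out_le P yz.
lia.
Qed.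

Hypothesis card_out : #|~: P| = 3 * m + 2.

Lemma missing_out_tight y : y \notin P -> missing (~: P) x y = m.
Proof.
move=> yP; have [|z [/and3P [_ zP yz] tri]] := exists_missing_triangle yP; first lia.
have xy : x != y by apply: contraNneq yP => <-.
have xz : x != z by apply: contraNneq zP => <-.
have := missing_out_le P xy; have := missing_out_le P xz; have := missing_out_le P yz.
lia.
Qed.

Lemma nonedge_link_trans y u v :
  third_out P u v y -> pair_out P u v -> ~~ edge x y u -> ~~ edge x y v -> ~~ edge x u v.
Proof.
move=> yuv uv nExyu nExyv; apply/negP => Exuv.
have /and3P [uP vP _] := uv.
have tight : missing (~: P) x u + missing (~: P) x v + missing (~: P) u v <= #|~: P| - 2.
  have /and3P [_ _ u_v] := uv.
  by rewrite !missing_out_tight // card_out; have := missing_out_le P u_v; lia.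
move: nExyv; rewrite edge_swapr (missing_triangle_tight freeP xP uv Exuv tight yuv) //.
by rewrite edge_swapr.
Qed.

Definition unlinked u v := (u == v) || ~~ edge x u v.

Lemma unlinked_equiv : {in ~: P & &, equivalence_rel unlinked}.
Proof.
move=> y u v; rewrite !inE => yP uP vP; split; first by rewrite /unlinked eqxx.
rewrite /unlinked; case: (eqVneq y u) => [<- // | yu] /= nExyu.
case: (eqVneq y v) => [<- | yv]; first by rewrite eq_sym (negbTE yu) edge_swapr.
case: (eqVneq u v) => [<- | uv] /=; first by rewrite nExyu.
have yuv : third_out P u v y by rewrite /third_out yP !(eq_sym _ y) yu yv.
have uvy : third_out P y v u by rewrite /third_out uP yu eq_sym uv.
have pair_uv : pair_out P u v by rewrite /pair_out uP vP uv.
have pair_yv : pair_out P y v by rewrite /pair_out yP vP yv.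
apply/idP/idP => [nExyv | nExuv]; first exact: nonedge_link_trans yuv pair_uv nExyu nExyv.
by apply: nonedge_link_trans uvy pair_yv _ nExuv; rewrite edge_swapr.
Qed.

Lemma card_unlinked_class y : y \notin P -> #|[set u in ~: P | unlinked y u]| = m.+1.
Proof.
move=> yP; rewrite (cardsD1 y) !inE yP /unlinked eqxx /= -(missing_out_tight yP).
rewrite /missing sum_bool_card add1n; congr _.+1; apply: eq_card => u; rewrite !inE.
case: (eqVneq u y) => [-> | uy] /=; first by rewrite ?andbF.
case: (boolP (u \in P)) => //= uP.
by have -> : u != x by apply: contraNneq uP => ->.
Qed.

Lemma card_out_tight_absurd : 0 < m -> False.
Proof.
move=> m_gt0.
have classes_card : {in equivalence_partition unlinked (~: P), forall B : {set T}, #|B| = m.+1}.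
  by move=> _ /imsetP [y yP ->]; rewrite card_unlinked_class // -in_setC.
have := card_uniform_partition classes_card (equivalence_partitionP unlinked_equiv).
rewrite card_out; case: #|_| => [|[|[|c]]]; lia.
Qed.

End OneVertex.

Lemma both_sides_free_absurd P :
  K43_free_1_3 P -> K43_free_1_3 (~: P) ->
  #|P| + #|~: P| = 4 * m + 4 -> m + 2 < #|P| -> m + 2 < #|~: P| -> False.
Proof.
move=> freeP freeC card_sum P_gt C_gt.
have := sum_missing_pairs_free freeC; have := sum_missing_pairs_le (~: P); rewrite !setCK.
move=> htC hsC; have := sum_missing_pairs_cross P.
exact: double_count_absurd card_sum P_gt C_gt
  (sum_missing_pairs_free freeP) (sum_missing_pairs_le P) hsC htC.
Qed.

End BoundedMissing.
End Link.

Theorem lemma8p10 (T : finType) (G : {set {set T}}) (A : {set T}) :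
  is_3graph G ->
  4 %| #|T| ->
  (forall x y : T, x != y -> 3 * #|T| <= 4 * codeg G x y + 4) ->
  3 * #|T| < 16 * #|A| ->
  16 * #|A| < 5 * #|T| ->
  exists S : {set T}, is_K43 G S /\ odd #|S :&: A| /\ odd #|S :&: ~: A|.
Proof.
move=> G3 /dvdnP [k n4k] codegG A_gt A_lt.
apply: NNPP => noK.
have freeA : K43_free_1_3 G A.
  move=> x y z w xA yA zA wA yz yw zw Exyz Exyw Exzw Eyzw.
  exact: noK (K43_1_3 xA yA zA wA yz yw zw Exyz Exyw Exzw Eyzw).
have freeB : K43_free_1_3 G (~: A).
  move=> x y z w xB yB zB wB yz yw zw Exyz Exyw Exzw Eyzw.
  have [S [KS [oddB oddA]]] := K43_1_3 xB yB zB wB yz yw zw Exyz Exyw Exzw Eyzw.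
  by apply: noK; exists S; rewrite setCK in oddA.
have missing_le x y : x != y -> missing G setT x y <= k - 1.
  by move=> xy; have := codeg_missing G3 xy; have := codegG x y xy; lia.
have cardA := cardsC A.
have [A_small | A_big] := leqP #|A| k.
  have /card_gt0P [x xA] : 0 < #|A| by lia.
  by have := card_out_le missing_le freeA xA; lia.
have [A_tight | A_large] := eqVneq #|A| k.+1.
  have /card_gt0P [x xA] : 0 < #|A| by lia.
  by apply: (card_out_tight_absurd missing_le freeA xA); lia.
by apply: (both_sides_free_absurd missing_le freeA freeB); lia.
Qed.
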